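(* Let $\mathcal{H}$ be a real Hilbert space, let $A\colon \mathcal{H}\rightrightarrows\mathcal{H}$ be maximally monotone, let $B\colon \mathcal{H}\to\mathcal{H}$ be monotone and $L$-Lipschitz, and suppose that $(A+B)^{-1}(0)\neq\varnothing$. Choose $\lambda\in \left(0,\frac{1}{2L}\right)$. Given $x_0,x_{-1}\in\mathcal{H}$, define the sequence $(x_k)$ by $$x_{k+1} = J_{\lambda A}\bigl(x_k - 2\lambda B(x_k) +\lambda B(x_{k-1})\bigr) \quad\forall k\in\mathbb{N}.$$ Then $(x_k)$ converges weakly to a point contained in $(A+B)^{-1}(0)$.
   Context: $J_{\lambda A}:=(I+\lambda A)^{-1}$ denotes the resolvent. *)

From HB Require Import structures.
From mathcomp Require Import all_boot all_order all_algebra.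
From mathcomp Require Import all_classical all_reals all_analysis.
Set Implicit Arguments. Unset Strict Implicit. Unset Printing Implicit Defensive.
Import Order.TTheory GRing.Theory Num.Theory.
Import numFieldNormedType.Exports.
Local Open Scope classical_set_scope.
Local Open Scope ring_scope.

Definition is_inner_product (R : realType) (H : normedModType R)
  (ip : H -> H -> R) : Prop :=
  [/\ forall x y, ip x y = ip y x,
      forall (a : R) x y z, ip (a *: x + y) z = a * ip x z + ip y z
    & forall x, ip x x = `|x| ^+ 2].

(* Set-valued operators H ⇉ H are maps H -> set H. *)
Definition monotone_op (R : realType) (H : normedModType R)
  (ip : H -> H -> R) (A : H -> set H) : Prop :=
  forall x y u v, A x u -> A y v -> 0 <= ip (x - y) (u - v).

Definition maximally_monotone (R : realType) (H : normedModType R)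
  (ip : H -> H -> R) (A : H -> set H) : Prop :=
  monotone_op ip A /\
  forall A' : H -> set H, monotone_op ip A' ->
    (forall x, A x `<=` A' x) -> forall x, A' x = A x.

Definition monotone_fun (R : realType) (H : normedModType R)
  (ip : H -> H -> R) (B : H -> H) : Prop :=
  forall x y, 0 <= ip (x - y) (B x - B y).

Definition lipschitz_with (R : realType) (H : normedModType R)
  (L : R) (B : H -> H) : Prop :=
  forall x y, `|B x - B y| <= L * `|x - y|.

(* Resolvent J_{lam A} = (I + lam A)^{-1}, as a set-valued map:
   p \in J_{lam A}(w)  <->  w \in p + lam A p. *)
Definition resolvent (R : realType) (H : normedModType R)
  (lam : R) (A : H -> set H) (w : H) : set H :=
  [set p | exists2 a, A p a & w = p + lam *: a].

Definition zer_sum (R : realType) (H : normedModType R)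
  (A : H -> set H) (B : H -> H) : set H :=
  [set z | exists2 a, A z a & a + B z = 0].

Definition weak_cvg_to (R : realType) (H : normedModType R)
  (ip : H -> H -> R) (x : nat -> H) (z : H) : Prop :=
  forall y, (fun k => ip (x k) y) @ \oo --> ip z y.

(* Fix a zero z of A + B, and let a_k in A x_{k+1} be the element supplied by
   the resolvent step.  The Malitsky-Tam energy
     |x_k - z|^2 - 2 lam <x_k - z, B x_k - B x_{k-1}> + lam L |x_k - x_{k-1}|^2
   dominates (1 - lam L) |x_k - z|^2 and drops by at least
   (1 - 2 lam L) |x_{k+1} - x_k|^2 at each step.  Hence the steps tend to 0,
   the iterates are bounded, |x_k - z| converges for every zero z, and the
   residual a_k + B x_{k+1} tends to 0.
   Weak cluster points are taken along ultrafilters: there every bounded scalar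
   sequence converges, and the Riesz representation turns the limit functional
   into a point.  Passing to the limit in the monotonicity inequalities, the
   maximality of A and Minty's trick for the Lipschitz B show that such points
   are zeros of A + B, and Opial's argument shows that they all coincide. *)

From HB Require Import structures.
From mathcomp Require Import all_boot all_order all_algebra.
From mathcomp Require Import all_classical all_reals all_analysis.
From mathcomp Require Import ring lra.
Import Order.TTheory GRing.Theory Num.Theory.
Import numFieldNormedType.Exports.
Local Open Scope classical_set_scope.
Local Open Scope ring_scope.
Set Implicit Arguments. Unset Strict Implicit. Unset Printing Implicit Defensive.

Section InnerProduct.
Variables (R : realType) (H : normedModType R) (ip : H -> H -> R).
Hypothesis hip : is_inner_product ip.

Lemma ipC x y : ip x y = ip y x.
Proof. by case: hip. Qed.

Lemma ipxx x : ip x x = `|x| ^+ 2.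
Proof. by case: hip. Qed.

Lemma ip0l z : ip 0 z = 0.
Proof. by case: hip => _ /(_ 1 0 0 z); rewrite scale1r addr0 mul1r; lra. Qed.

Lemma ipDl x y z : ip (x + y) z = ip x z + ip y z.
Proof. by case: hip => _ /(_ 1 x y z); rewrite scale1r mul1r. Qed.

Lemma ipZl a x z : ip (a *: x) z = a * ip x z.
Proof. by case: hip => _ /(_ a x 0 z); rewrite addr0 ip0l addr0. Qed.

Lemma ipNl x z : ip (- x) z = - ip x z.
Proof. by rewrite -scaleN1r ipZl mulN1r. Qed.

Lemma ipBl x y z : ip (x - y) z = ip x z - ip y z.
Proof. by rewrite ipDl ipNl. Qed.

Lemma ip0r z : ip z 0 = 0.
Proof. by rewrite ipC ip0l. Qed.

Lemma ipDr x y z : ip z (x + y) = ip z x + ip z y.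
Proof. by rewrite ipC ipDl !(ipC z). Qed.

Lemma ipZr a x z : ip z (a *: x) = a * ip z x.
Proof. by rewrite ipC ipZl ipC. Qed.

Lemma ipNr x z : ip z (- x) = - ip z x.
Proof. by rewrite ipC ipNl ipC. Qed.

Lemma ipBr x y z : ip z (x - y) = ip z x - ip z y.
Proof. by rewrite ipDr ipNr. Qed.

Lemma sqrnormD x y : `|x + y| ^+ 2 = `|x| ^+ 2 + 2 * ip x y + `|y| ^+ 2.
Proof. by rewrite -!ipxx ipDl !ipDr (ipC y x); ring. Qed.

Lemma sqrnormB x y : `|x - y| ^+ 2 = `|x| ^+ 2 - 2 * ip x y + `|y| ^+ 2.
Proof. by rewrite -!ipxx ipBl !ipBr (ipC y x); ring. Qed.

Lemma ip_le_norm x y : ip x y <= `|x| * `|y|.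
Proof.
have [->|x0] := eqVneq x 0; first by rewrite ip0l normr0 mul0r.
have [->|y0] := eqVneq y 0; first by rewrite ip0r normr0 mulr0.
have xy0 : 0 < `|x| * `|y| by rewrite mulr_gt0 ?normr_gt0.
have := sqr_ge0 `| `|y| *: x - `|x| *: y|.
rewrite -[_ ^+ 2]/(`|_| ^+ 2) sqrnormB !normrZ !normr_id ipZl ipZr => h.
rewrite -(ler_pM2l xy0); nra.
Qed.

Lemma normr_ip_le x y : `|ip x y| <= `|x| * `|y|.
Proof.
rewrite ler_norml ip_le_norm andbT.
by have := ip_le_norm (- x) y; rewrite ipNl normrN; lra.
Qed.

End InnerProduct.

Lemma norm_le_cvg0 (R : realType) (V : normedModType R) (T : Type)
    (F : set_system T) {FF : Filter F} (f : T -> V) (g : T -> R) :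
  (forall t, `|f t| <= g t) -> g @ F --> 0 -> f @ F --> 0.
Proof.
move=> fg g0; apply/cvgr0Pnorm_le => e e0.
near=> t; apply: le_trans (fg t) (le_trans (ler_norm _) _).
by near: t; exact: cvgr0_norm_le.
Unshelve. all: end_near.
Qed.
Arguments norm_le_cvg0 {R V T F FF f} g.

Lemma sqr_cvg0 (R : realType) (T : Type) (F : set_system T) {FF : Filter F}
    (d : T -> R) :
  (forall t, 0 <= d t) -> (fun t => d t ^+ 2) @ F --> 0 -> d @ F --> 0.
Proof.
move=> d0 /(cvg_comp _ _) /(_ (@sqrt_continuous R 0)); rewrite sqrtr0.
by apply: cvg_trans; apply: near_eq_cvg; near=> t; rewrite /= sqrtr_sqr ger0_norm.
Unshelve. all: end_near.
Qed.

Lemma cvg_ultra (T : Type) (V : topologicalType) (F : set_system T)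
    {FF : ProperFilter F} (f : T -> V) (l : V) :
  (forall U, UltraFilter U -> F `<=` U -> f @ U --> l) -> f @ F --> l.
Proof.
move=> fUl A /= Al; apply: contrapT => nFA.
pose C := ~` (f @^-1` A).
pose G := filter_from F (fun B => B `&` C).
have GF : ProperFilter G.
  apply: filter_from_proper => [|B FB].
    apply: filter_from_filter => [|B1 B2 FB1 FB2].
      by exists setT; exact: filterT.
    exists (B1 `&` B2); first exact: filterI.
    by move=> t [[B1t B2t] Ct].
  apply/set0P/negP => /eqP BC0.
  apply: nFA; apply: (@filterS _ F _ B (f @^-1` A)) => // t Bt.
  apply: contrapT => nAt.
  by have : (B `&` C) t by []; rewrite BC0.
have [U [UU GU]] := ultraFilterLemma GF.
have UC : U C by apply: GU; exists setT => //; exact: filterT.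
have UA : U (f @^-1` A).
  by apply: (fUl U UU) => // B FB; apply: GU; exists B => // t [].
by have [t []] := filter_ex (filterI UA UC).
Qed.

Lemma ultra_bounded_cvg (R : realType) (U : set_system nat) (UU : UltraFilter U)
    (s : nat -> R) (M : R) :
  (forall k, `|s k| <= M) -> exists l : R, s @ U --> l.
Proof.
move=> sM.
have sU : (s @ U) [set` `[- M, M]].
  by apply: nearW => k; rewrite /= in_itv /= -ler_norml.
have [l [_ cl]] := @segment_compact R (- M) M (s @ U) _ sU.
exists l => N lN; have [//|nsN] := in_ultra_setVsetC (s @^-1` N) UU.
by have [q [nq Nq]] := cl _ _ (nsN : (s @ U) (~` N)) lN.
Qed.

Lemma quadratic_ge0_linear_eq0 (R : realFieldType) (b c : R) :
  (forall t, 0 <= t * b + t ^+ 2 * c) -> b = 0.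
Proof.
move=> bc; pose s := (`|c| + 1)^-1.
have c1 : 0 < `|c| + 1 by have := normr_ge0 c; lra.
have s0 : 0 < s by rewrite invr_gt0.
have sc1 : s * c < 1.
  by rewrite mulrC ltr_pdivrMr // mul1r; have := ler_norm c; lra.
have := bc (- (b * s)).
rewrite (_ : _ + _ = b ^+ 2 * (s * (s * c - 1))); last by ring.
have : s * (s * c - 1) < 0 by rewrite pmulr_rlt0 // subr_lt0.
move: (s * (s * c - 1)) => k k0 bk.
by apply/eqP; rewrite -sqrf_eq0 eq_le sqr_ge0 andbT; nra.
Qed.

Section Riesz.
Variables (R : realType) (H : completeNormedModType R) (ip : H -> H -> R).
Hypothesis hip : is_inner_product ip.
Variables (f : H -> R) (C : R).
Hypothesis flin : forall a u v, f (a *: u + v) = a * f u + f v.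
Hypothesis fC : forall u, `|f u| <= C * `|u|.

Let f0 : f 0 = 0.
Proof. by have := flin 1 0 0; rewrite scale1r addr0 mul1r; lra. Qed.

Let fD u v : f (u + v) = f u + f v.
Proof. by have := flin 1 u v; rewrite scale1r mul1r. Qed.

Let fZ a u : f (a *: u) = a * f u.
Proof. by rewrite -[a *: u]addr0 flin f0 addr0. Qed.

(* Riesz's proof: a minimiser of [riesz_energy], the limit of a minimising
   sequence that is Cauchy by the parallelogram law, represents [f]. *)
Definition riesz_energy v := `|v| ^+ 2 - 2 * f v.

Let m := inf (range riesz_energy).

Let riesz_energy_lbound : has_lbound (range riesz_energy).
Proof.
exists (- C ^+ 2) => _ [v _ <-]; rewrite /riesz_energy.
by have := fC v; have := ler_norm (f v); have := sqr_ge0 (`|v| - C); nra.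
Qed.

Let inf_le_energy v : m <= riesz_energy v.
Proof. by apply: ge_inf riesz_energy_lbound _ _; exists v. Qed.

Let sqr_dist_le_energy a b :
  `|a - b| ^+ 2 <= 2 * riesz_energy a + 2 * riesz_energy b - 4 * m.
Proof.
have := inf_le_energy (2^-1 *: (a + b)).
rewrite /riesz_energy normrZ fZ fD ger0_norm ?invr_ge0 ?ler0n // exprMn.
have -> : (2^-1 : R) ^+ 2 = 4^-1 by rewrite expr2 -invfM -natrM.
have := sqrnormD hip a b; have := sqrnormB hip a b; lra.
Qed.

Let f_cvg (v : nat -> H) z : v @ \oo --> z -> f \o v @ \oo --> f z.
Proof.
move=> vz; have fvz : (fun n => f (v n - z)) @ \oo --> 0.
  apply: (norm_le_cvg0 (fun n => C * `|v n - z|)) => [n|].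
    exact: fC.
  have : (fun n => C * `|v n - z|) @ \oo --> C * `|z - z|.
    by apply: cvgMl_tmp; apply: cvg_norm; apply: cvgB => //; exact: cvg_cst.
  by rewrite subrr normr0 mulr0.
have : (fun n => f z + f (v n - z)) @ \oo --> f z + 0.
  by apply: cvgD => //; exact: cvg_cst.
rewrite addr0; apply: cvg_trans.
by apply: near_eq_cvg; near=> n; rewrite /= -fD addrC subrK.
Unshelve. all: end_near.
Qed.

Let riesz_energy_cvg (v : nat -> H) z :
  v @ \oo --> z -> riesz_energy \o v @ \oo --> riesz_energy z.
Proof.
move=> vz; apply: cvgB; last by apply: cvgMl_tmp; exact: f_cvg.
by rewrite expr2; under eq_fun do rewrite expr2; apply: cvgM; exact: cvg_norm.
Qed.

Let riesz_minimizer : exists z, forall w, riesz_energy z <= riesz_energy w.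
Proof.
have /choice [v vm] : forall n, exists v, riesz_energy v < m + n.+1%:R^-1.
  move=> n; have n0 : 0 < n.+1%:R^-1 :> R by rewrite invr_gt0.
  have E0 : range riesz_energy !=set0 by exists (riesz_energy 0), 0.
  have [_ [v _ <-] ?] := inf_adherent n0 (conj E0 riesz_energy_lbound).
  by exists v.
have v_cauchy : cauchy (v @ \oo).
  apply: cauchy_exP => e e0.
  have e8 : 0 < e ^+ 2 / 8 by rewrite divr_gt0 ?exprn_gt0.
  have [N _ hN] := cvgr0_norm_le _ (@cvg_harmonic R) _ e8.
  exists (v N); exists N => // n /= Nn; rewrite -ball_normE /ball_ /=.
  rewrite -ltr_sqr ?nnegrE ?normr_ge0 ?ltW //.
  have := sqr_dist_le_energy (v N) (v n); have := vm N; have := vm n.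
  have := hN N (leqnn N); have := hN n Nn.
  rewrite /= !ger0_norm ?invr_ge0 ?ler0n //.
  have := exprn_gt0 2 e0; move: (e ^+ 2) (N.+1%:R^-1) (n.+1%:R^-1) => E a b; lra.
have vz : v @ \oo --> lim (v @ \oo) by apply/cauchy_cvgP.
exists (lim (v @ \oo)) => w; apply: le_trans (inf_le_energy w).
have mh : (fun n => m + harmonic n) @ \oo --> m.
  rewrite -[X in _ --> X]addr0.
  by apply: cvgD; [exact: cvg_cst|exact: cvg_harmonic].
by apply: (ler_cvg_to (riesz_energy_cvg vz) mh); near=> n; apply/ltW/vm.
Unshelve. all: end_near.
Qed.

Lemma riesz_representation : exists z, forall v, f v = ip z v.
Proof.
have [z zmin] := riesz_minimizer; exists z => w.
suff : (2 * (ip z w - f w)) = 0 by lra.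
apply: quadratic_ge0_linear_eq0 (`|w| ^+ 2) _ => t.
have := zmin (z + t *: w).
rewrite /riesz_energy (sqrnormD hip) fD fZ normrZ exprMn (ipZr hip).
by rewrite real_normK ?num_real //; lra.
Qed.

End Riesz.

Section WeakLimits.
Variables (R : realType) (H : completeNormedModType R) (ip : H -> H -> R).
Hypothesis hip : is_inner_product ip.

Definition weak_lim (F : set_system nat) (X : nat -> H) (p : H) :=
  forall w, (fun k => ip (X k) w) @ F --> ip p w.

(* Along an ultrafilter the pointwise limits [f w] exist by compactness of
   segments, and Riesz turns the bounded linear functional [f] into a point. *)
Lemma weak_lim_ultra_ex (U : set_system nat) (UU : UltraFilter U)
    (X : nat -> H) (M : R) :
  (forall k, `|X k| <= M) -> exists p, weak_lim U X p.
Proof.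
move=> XM.
have XwM w k : `|ip (X k) w| <= M * `|w|.
  by apply: le_trans (normr_ip_le hip _ _) _; apply: ler_wpM2r.
have [f fX] := choice (fun w => ultra_bounded_cvg UU (XwM w)).
have [a u v|u|p fp] := @riesz_representation R H ip hip f M.
- apply: (cvg_unique (@Rhausdorff R) (fX _)).
  have -> : (fun k => ip (X k) (a *: u + v)) =
      (fun k => a * ip (X k) u + ip (X k) v).
    by apply/funext => k; rewrite (ipDr hip) (ipZr hip).
  by apply: cvgD => //; exact: cvgMl_tmp.
- by apply: (ler_cvg_to (cvg_norm (fX u)) (cvg_cst _)); exact: nearW.
- by exists p => w; rewrite -fp.
Qed.

Lemma weak_lim_unique (U1 U2 : set_system nat) {U1F : ProperFilter U1}
    {U2F : ProperFilter U2} (X : nat -> H) (p1 p2 : H) :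
  \oo `<=` U1 -> \oo `<=` U2 ->
  weak_lim U1 X p1 -> weak_lim U2 X p2 ->
  (exists l1 : R, (fun k => `|X k - p1| ^+ 2) @ \oo --> l1) ->
  (exists l2 : R, (fun k => `|X k - p2| ^+ 2) @ \oo --> l2) ->
  p1 = p2.
Proof.
move=> sU1 sU2 Xp1 Xp2 [l1 l1X] [l2 l2X].
(* [|X k - p1|^2 - |X k - p2|^2] is affine in [X k], so its limit can be read
   off along any filter where [X] converges weakly. *)
have gap U p : ProperFilter U -> \oo `<=` U -> weak_lim U X p ->
    l1 - l2 = 2 * ip p (p2 - p1) + (`|p1| ^+ 2 - `|p2| ^+ 2).
  move=> UU sU Xp.
  have -> : l1 - l2 = lim ((fun k => `|X k - p1| ^+ 2 - `|X k - p2| ^+ 2) @ U).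
    by apply/esym/cvg_lim => //; exact: cvg_trans (cvg_app _ sU) (cvgB l1X l2X).
  have -> : (fun k => `|X k - p1| ^+ 2 - `|X k - p2| ^+ 2) =
      (fun k => 2 * ip (X k) (p2 - p1) + (`|p1| ^+ 2 - `|p2| ^+ 2)).
    by apply/funext => k; rewrite !(sqrnormB hip) (ipBr hip); ring.
  apply: cvg_lim => //; apply: cvgD; last exact: cvg_cst.
  by apply: cvgMl_tmp; exact: Xp.
have gap1 := gap _ _ U1F sU1 Xp1; have gap2 := gap _ _ U2F sU2 Xp2.
suff : `|p2 - p1| ^+ 2 = 0.
  by move/eqP; rewrite sqrf_eq0 normr_eq0 subr_eq0 => /eqP.
by rewrite -(ipxx hip) (ipBl hip); lra.
Qed.

Lemma opial (S : set H) (X : nat -> H) (M : R) :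
  (forall k, `|X k| <= M) ->
  (forall z, S z -> exists l : R, (fun k => `|X k - z| ^+ 2) @ \oo --> l) ->
  (forall U p, UltraFilter U -> \oo `<=` U -> weak_lim U X p -> S p) ->
  exists2 p, S p & weak_cvg_to ip X p.
Proof.
move=> XM Sdist Sclus.
have [U0 [U0U sU0]] := ultraFilterLemma (@eventually_filter).
have [p0 Xp0] := weak_lim_ultra_ex U0U XM.
have Sp0 := Sclus _ _ U0U sU0 Xp0.
exists p0 => // w; apply: cvg_ultra => U UU sU.
have [p Xp] := weak_lim_ultra_ex UU XM.
have Sp := Sclus _ _ UU sU Xp.
by rewrite (weak_lim_unique sU0 sU Xp0 Xp (Sdist _ Sp0) (Sdist _ Sp)).
Qed.

End WeakLimits.

Section MonotoneOperators.
Variables (R : realType) (H : normedModType R) (ip : H -> H -> R).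
Hypothesis hip : is_inner_product ip.

Lemma lipschitz_ip_le (B : H -> H) (L : R) u y y' :
  0 <= L -> lipschitz_with L B ->
  2 * ip u (B y - B y') <= L * (`|u| ^+ 2 + `|y - y'| ^+ 2).
Proof.
move=> L0 lipB.
have uB : ip u (B y - B y') <= `|u| * (L * `|y - y'|).
  by apply: le_trans (ip_le_norm hip _ _) _; apply: ler_wpM2l.
have := mulr_ge0 L0 (sqr_ge0 (`|u| - `|y - y'|)); nra.
Qed.

Lemma maximally_monotone_graph (A : H -> set H) p u :
  maximally_monotone ip A ->
  (forall y v, A y v -> 0 <= ip (p - y) (u - v)) -> A p u.
Proof.
move=> [monoA maxA] pu.
pose A' x := A x `|` [set v | x = p /\ v = u].
have monoA' : monotone_op ip A'.
  move=> x1 x2 u1 u2 [Au1|[-> ->]] [Au2|[-> ->]].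
  - exact: monoA.
  - by rewrite -opprB -[u1 - u]opprB (ipNl hip) (ipNr hip) opprK; exact: pu.
  - exact: pu.
  - by rewrite subrr (ip0l hip).
by rewrite -(maxA A' monoA' (fun x v Av => or_introl Av) p); right.
Qed.

Lemma lipschitz_minty (B : H -> H) (L : R) p q :
  0 <= L -> lipschitz_with L B ->
  (forall w, 0 <= ip (p - w) (q - B w)) -> q = B p.
Proof.
move=> L0 lipB pq; pose h := B p - q; pose t := (L + 1)^-1.
have t0 : 0 < t by rewrite invr_gt0; lra.
have tL : t * L < 1 by rewrite mulrC ltr_pdivrMr ?mul1r; lra.
have ptp : p - (p - t *: h) = t *: h by rewrite opprB addrC subrK.
have := pq (p - t *: h); rewrite ptp (ipZl hip) pmulr_rge0 // => hq.
have lip : ip h (B p - B (p - t *: h)) <= `|h| * (L * (t * `|h|)).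
  apply: le_trans (ip_le_norm hip _ _) _; apply: ler_wpM2l => //.
  by apply: le_trans (lipB _ _) _; rewrite ptp normrZ gtr0_norm.
have hqe : ip h (q - B (p - t *: h)) = - `|h| ^+ 2 + ip h (B p - B (p - t *: h)).
  by rewrite -(ipxx hip) /h !(ipBr hip) !(ipBl hip); ring.
suff h0 : `|h| ^+ 2 <= 0.
  apply/eqP; rewrite eq_sym -subr_eq0 -normr_eq0 -/h -sqrf_eq0 eq_le h0.
  exact: sqr_ge0.
have : `|h| ^+ 2 * (1 - t * L) <= 0.
  by rewrite mulrBr mulr1 (_ : _ * (t * L) = `|h| * (L * (t * `|h|))); [lra|ring].
by rewrite pmulr_lle0 // subr_gt0.
Qed.

End MonotoneOperators.

Section WeakClusterZero.
Variables (R : realType) (H : completeNormedModType R) (ip : H -> H -> R).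
Variables (A : H -> set H) (B : H -> H) (L : R).
Hypothesis hip : is_inner_product ip.
Hypothesis maxA : maximally_monotone ip A.
Hypothesis monoB : monotone_fun ip B.
Hypothesis L0 : 0 <= L.
Hypothesis lipB : lipschitz_with L B.
Variables (U : set_system nat) (X a : nat -> H) (M : R) (p : H).
Hypothesis UU : UltraFilter U.
Hypothesis sU : \oo `<=` U.
Hypothesis XM : forall k, `|X k| <= M.
Hypothesis hA : forall k, A (X k) (a k).
Hypothesis residual0 : (fun k => `|a k + B (X k)|) @ \oo --> 0.
Hypothesis Xp : weak_lim ip U X p.

Let residual_ip0 c : (fun k => ip (X k - c) (a k + B (X k))) @ U --> 0.
Proof.
apply: cvg_trans (cvg_app _ sU) _.
apply: (norm_le_cvg0 (fun k => (M + `|c|) * `|a k + B (X k)|)).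
  move=> k; apply: le_trans (normr_ip_le hip _ _) _; apply: ler_wpM2r => //.
  by apply: le_trans (ler_normB _ _) _; rewrite lerD2r.
by rewrite -(mulr0 (M + `|c|)); apply: cvgMl_tmp.
Qed.

Let BX_bounded k : `|B (X k)| <= `|B 0| + L * M.
Proof.
have := lipB (X k) 0; rewrite subr0 => BX.
have := ler_normD (B (X k) - B 0) (B 0); rewrite subrK.
have := ler_wpM2l L0 (XM k); lra.
Qed.

(* The limit, along [U], of the two monotonicity inequalities at [(X k, a k)]
   against [(y, v)] in the graph of [A] and against [w] for [B]; the cross
   term [ip (X k) (B (X k))] cancels, so only weak limits are needed. *)
Let weak_cluster_monotone_ineq q : weak_lim ip U (B \o X) q ->
  forall y v w, A y v -> 0 <= ip (y - w) q - ip (p - y) v - ip (p - w) (B w).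
Proof.
move=> BXq y v w Ayv.
pose E k := ip (X k - y) (a k + B (X k)) + ip (B (X k)) (y - w)
  - ip (X k) (v + B w) + ip y v + ip w (B w).
have E_ge0 k : 0 <= E k.
  have := maxA.1 _ _ _ _ (hA k) Ayv; have := monoB (X k) w.
  rewrite /E !(ipBl hip, ipBr hip, ipDl hip, ipDr hip, ipNl hip, ipNr hip).
  by rewrite !(ipC hip (B (X k))); lra.
have El : E @ U --> 0 + ip q (y - w) - ip p (v + B w) + ip y v + ip w (B w).
  rewrite /E; apply: cvgD; last exact: cvg_cst.
  apply: cvgD; last exact: cvg_cst.
  apply: cvgB; last exact: Xp.
  by apply: cvgD; [exact: residual_ip0|exact: BXq].
have : 0 <= 0 + ip q (y - w) - ip p (v + B w) + ip y v + ip w (B w).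
  by apply: (ler_cvg_to (cvg_cst 0) El); exact: nearW.
by rewrite !(ipBl hip, ipBr hip, ipDl hip, ipDr hip) !(ipC hip q); lra.
Qed.

Lemma weak_cluster_zer_sum : zer_sum A B p.
Proof.
have [q BXq] := weak_lim_ultra_ex hip UU BX_bounded.
have key := weak_cluster_monotone_ineq BXq.
have Apq : A p (- q).
  apply: (maximally_monotone_graph hip maxA) => y v Ayv.
  have := key y v p Ayv; rewrite subrr (ip0l hip) subr0.
  by rewrite !(ipBl hip, ipBr hip, ipNr hip) (ipC hip y q) (ipC hip p q); lra.
have qBp : q = B p.
  apply: (lipschitz_minty hip L0 lipB) => w.
  by have := key p (- q) w Apq; rewrite subrr (ip0l hip) subr0 (ipBr hip).
by exists (- q); rewrite // qBp addNr.
Qed.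

End WeakClusterZero.

Section ForwardReflectedBackward.
Variables (R : realType) (H : normedModType R) (ip : H -> H -> R).
Variables (A : H -> set H) (B : H -> H) (L lam : R).
Hypothesis hip : is_inner_product ip.
Hypothesis monoA : monotone_op ip A.
Hypothesis monoB : monotone_fun ip B.
Hypothesis L0 : 0 <= L.
Hypothesis lipB : lipschitz_with L B.
Hypothesis lam0 : 0 < lam.

Definition frb_energy z y y' :=
  `|y - z| ^+ 2 - 2 * lam * ip (y - z) (B y - B y') + lam * L * `|y - y'| ^+ 2.

Lemma frb_energy_lb z y y' : (1 - lam * L) * `|y - z| ^+ 2 <= frb_energy z y y'.
Proof.
have := ler_wpM2l (ltW lam0) (lipschitz_ip_le hip (y - z) y y' L0 lipB).
by rewrite /frb_energy; lra.
Qed.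

Lemma frb_energy_step x1 x0 xp z a az :
  A x1 a -> A z az -> az + B z = 0 ->
  x0 - (2 * lam) *: B x0 + lam *: B xp = x1 + lam *: a ->
  frb_energy z x1 x0 + (1 - 2 * lam * L) * `|x1 - x0| ^+ 2 <= frb_energy z x0 xp.
Proof.
move=> Ax1 Az zB x01.
have {}Az : A z (- B z) by move/eqP: zB; rewrite addr_eq0 => /eqP <-.
have la : lam *: a = x0 - (2 * lam) *: B x0 + lam *: B xp - x1.
  by rewrite x01 addrAC subrr add0r.
have monA : 0 <= ip (x1 - z) (lam *: a) + lam * ip (x1 - z) (B z).
  rewrite (ipZr hip) -mulrDr -(ipDr hip) -[B z]opprK.
  by apply: mulr_ge0 (ltW lam0) _; exact: monoA.
have monB := mulr_ge0 (ltW lam0) (monoB x1 z).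
have young := ler_wpM2l (ltW lam0) (lipschitz_ip_le hip (x0 - x1) x0 xp L0 lipB).
have x0z : x0 - z = (x1 - z) + (x0 - x1) by rewrite [RHS]addrC addrA subrK.
rewrite /frb_energy x0z (distrC x1 x0).
move: (x1 - z) monA monB => e monA monB.
rewrite (sqrnormD hip e) (ipDl hip e).
rewrite la !(ipBr hip, ipDr hip, ipZr hip, ipNr hip) in monA monB young *.
lra.
Qed.

End ForwardReflectedBackward.

Definition seq_prev (H : Type) (x : nat -> H) (xm1 : H) k :=
  if k is k'.+1 then x k' else xm1.

Section FRBIterates.
Variables (R : realType) (H : normedModType R) (ip : H -> H -> R).
Variables (A : H -> set H) (B : H -> H) (L lam : R).
Hypothesis hip : is_inner_product ip.
Hypothesis monoA : monotone_op ip A.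
Hypothesis monoB : monotone_fun ip B.
Hypothesis L0 : 0 <= L.
Hypothesis lipB : lipschitz_with L B.
Hypothesis lam0 : 0 < lam.
Hypothesis lamL : 2 * lam * L < 1.
Variables (x a : nat -> H) (xm1 : H).
Hypothesis hA : forall k, A (x k.+1) (a k).
Hypothesis hx : forall k,
  x k - (2 * lam) *: B (x k) + lam *: B (seq_prev x xm1 k) = x k.+1 + lam *: a k.
Variables (z az : H).
Hypothesis Az : A z az.
Hypothesis zB : az + B z = 0.

Let E k := frb_energy ip B L lam z (x k) (seq_prev x xm1 k).

Let gap2_gt0 : 0 < 1 - 2 * lam * L.
Proof. by rewrite subr_gt0. Qed.

Let gap1_gt0 : 0 < 1 - lam * L.
Proof. by have := mulr_ge0 (ltW lam0) L0; have := lamL; rewrite -mulrA; lra. Qed.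

Let E_step k : E k.+1 + (1 - 2 * lam * L) * `|x k.+1 - x k| ^+ 2 <= E k.
Proof.
exact: (frb_energy_step hip monoA monoB L0 lipB lam0 (hA k) Az zB (hx k)).
Qed.

Let E_ge0 k : 0 <= E k.
Proof.
apply: le_trans (frb_energy_lb hip L0 lipB lam0 _ _ _).
by rewrite mulr_ge0 ?sqr_ge0 ?ltW.
Qed.

Let E_nonincreasing : nonincreasing_seq E.
Proof.
apply/nonincreasing_seqP => k; have := E_step k.
have := mulr_ge0 (ltW gap2_gt0) (sqr_ge0 `|x k.+1 - x k|); lra.
Qed.

Let E_cvg : exists l : R, E @ \oo --> l.
Proof.
exists (inf (range E)); apply: nonincreasing_cvgn E_nonincreasing _.
by exists 0 => _ [k _ <-]; exact: E_ge0.
Qed.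

Lemma frb_bounded : exists M, forall k, `|x k| <= M.
Proof.
exists (1 + E 0%N / (1 - lam * L) + `|z|) => k.
have : `|x k - z| ^+ 2 <= E 0%N / (1 - lam * L).
  rewrite ler_pdivlMr // mulrC; apply: le_trans (E_nonincreasing (leq0n k)).
  exact: frb_energy_lb.
have := sqr_ge0 (`|x k - z| - 1); have := ler_normD (x k - z) z.
rewrite subrK; nra.
Qed.

Lemma frb_step_cvg0 : (fun k => `|x k.+1 - x k|) @ \oo --> 0.
Proof.
apply: sqr_cvg0 => [k|]; first exact: normr_ge0.
have [l El] := E_cvg.
apply: (norm_le_cvg0 (fun k => (E k - E k.+1) / (1 - 2 * lam * L))).
  move=> k; rewrite ger0_norm ?sqr_ge0 // ler_pdivlMr //.
  by have := E_step k; lra.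
rewrite -(mul0r (1 - 2 * lam * L)^-1) -(subrr l).
by apply: cvgMr_tmp; apply: cvgB => //; rewrite cvg_shiftS.
Qed.

Let prev_cvg0 : (fun k => `|x k - seq_prev x xm1 k|) @ \oo --> 0.
Proof. by rewrite -cvg_shiftS; exact: frb_step_cvg0. Qed.

Lemma frb_dist_cvg : exists l : R, (fun k => `|x k - z| ^+ 2) @ \oo --> l.
Proof.
have [l El] := E_cvg; have [M xM] := frb_bounded.
have cross : (fun k => 2 * lam * ip (x k - z) (B (x k) - B (seq_prev x xm1 k)))
    @ \oo --> 0.
  have lam2 : 0 <= 2 * lam by rewrite mulr_ge0 // ltW.
  apply: (norm_le_cvg0
    (fun k => 2 * lam * (M + `|z|) * L * `|x k - seq_prev x xm1 k|)) => [k|].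
    rewrite normrM ger0_norm // -!mulrA !ler_pM2l //.
    apply: le_trans (normr_ip_le hip _ _) _; apply: ler_pM => //.
    by apply: le_trans (ler_normB _ _) _; rewrite lerD2r.
  by rewrite -[X in _ --> X](mulr0 (2 * lam * (M + `|z|) * L)); apply: cvgMl_tmp.
have jump : (fun k => lam * L * `|x k - seq_prev x xm1 k| ^+ 2) @ \oo --> 0.
  rewrite -[X in _ --> X](mulr0 (lam * L)); apply: cvgMl_tmp.
  rewrite -[X in _ --> X](mulr0 0); under eq_fun do rewrite expr2.
  exact: cvgM.
exists (l + 0 - 0); apply: cvg_trans (cvgB (cvgD El cross) jump).
by apply: near_eq_cvg; near=> k; rewrite /E /frb_energy !fctE /=; ring.
Unshelve. all: end_near.
Qed.

Lemma frb_residual_cvg0 : (fun k => `|a k + B (x k.+1)|) @ \oo --> 0.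
Proof.
pose d k := `|x k.+1 - x k| + lam * L * `|x k.+1 - x k|
  + lam * L * `|x k - seq_prev x xm1 k|.
have res_d k : `|a k + B (x k.+1)| <= lam^-1 * d k.
  rewrite ler_pdivlMl // -[X in X * _](ger0_norm (ltW lam0)) -normrZ scalerDr.
  have -> : lam *: a k = x k - (2 * lam) *: B (x k) + lam *: B (seq_prev x xm1 k)
      - x k.+1 by rewrite hx addrAC subrr add0r.
  have -> : x k - (2 * lam) *: B (x k) + lam *: B (seq_prev x xm1 k) - x k.+1
      + lam *: B (x k.+1) = (x k - x k.+1) + (lam *: (B (x k.+1) - B (x k))
      - lam *: (B (x k) - B (seq_prev x xm1 k))).
    rewrite mulr_natl -scalerMnl mulr2n !scalerBr opprB opprD !addrA.
    by rewrite (ACl (1*5*6*2*4*3)).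
  apply: le_trans (ler_normD _ _) _; rewrite /d -addrA (distrC (x k)) lerD2l.
  apply: le_trans (ler_normB _ _) _.
  rewrite !normrZ (ger0_norm (ltW lam0)) -!mulrA.
  by apply: lerD; rewrite ler_pM2l //; exact: lipB.
apply: (norm_le_cvg0 (fun k => lam^-1 * d k)) => [k|].
  by rewrite ger0_norm.
have : (fun k => lam^-1 * d k) @ \oo --> lam^-1 * (0 + lam * L * 0 + lam * L * 0).
  apply: cvgMl_tmp; apply: cvgD; first apply: cvgD.
  - exact: frb_step_cvg0.
  - by apply: cvgMl_tmp; exact: frb_step_cvg0.
  - by apply: cvgMl_tmp; exact: prev_cvg0.
by rewrite !(mulr0, addr0).
Qed.

End FRBIterates.

Unset Implicit Arguments.

Theorem corollary2p6 (R : realType) (H : completeNormedModType R)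
  (ip : H -> H -> R) (A : H -> set H) (B : H -> H) (L lam : R)
  (xm1 : H) (x : nat -> H) :
  is_inner_product ip ->
  maximally_monotone ip A ->
  monotone_fun ip B ->
  0 < L -> lipschitz_with L B ->
  zer_sum A B !=set0 ->
  0 < lam -> lam < (2 * L)^-1 ->
  (forall k : nat,
     resolvent lam A
       (x k - (2 * lam) *: B (x k)
            + lam *: B (if k is k'.+1 then x k' else xm1))
       (x k.+1)) ->
  exists2 z, zer_sum A B z & weak_cvg_to ip x z.
Proof.
move=> hip maxA monoB L_gt0 lipB [z [az Az zB]] lam0 lamL hres.
have L0 := ltW L_gt0.
have {}lamL : 2 * lam * L < 1.
  by rewrite (mulrC 2) -mulrA -ltr_pdivlMr ?mul1r // mulr_gt0.
have /choice [a xa] : forall k, exists a, A (x k.+1) a /\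
    x k - (2 * lam) *: B (x k) + lam *: B (seq_prev x xm1 k) = x k.+1 + lam *: a.
  by move=> k; have [a Aa xk] := hres k; exists a.
have hA k := (xa k).1; have hx k := (xa k).2.
have [M xM] := frb_bounded hip maxA.1 monoB L0 lipB lam0 lamL hA hx Az zB.
suff [p Sp Xp] : exists2 p, zer_sum A B p & weak_cvg_to ip (fun k => x k.+1) p.
  by exists p => // w; rewrite -cvg_shiftS; exact: Xp.
apply: (opial hip (M := M)) => [k|p [ap Ap pB]|U p UU sU Xp]; first exact: xM.
- have [l dl] := frb_dist_cvg hip maxA.1 monoB L0 lipB lam0 lamL hA hx Ap pB.
  by exists l; rewrite -cvg_shiftS in dl.
- have res0 := frb_residual_cvg0 hip maxA.1 monoB L0 lipB lam0 lamL hA hx Az zB.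
  exact: (weak_cluster_zer_sum hip maxA monoB L0 lipB UU sU
    (fun k => xM k.+1) hA res0 Xp).
Qed.
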